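(* Let $N\ge1$, $H=(H_1,\dots,H_N)\in]0,1[^N$, $a\in\mathbb{R}^N\setminus\{(0,\dots,0)\}$, let $S^H(a)$ be the mixed sub-fractional Brownian motion with parameters $N,a,H$, and for $0\le u<v\le s<t$ let $C_{u,v,s,t}=\mathrm{Cov}\big(S^H_v(a)-S^H_u(a),\,S^H_t(a)-S^H_s(a)\big)$. Then for all $0\le u<v\le s<t$: (1) $C_{u,v,s,t}=0$ if $H_i=1/2$ for every $i\in\{1,\dots,N\}$; (2) $C_{u,v,s,t}>0$ if $H_i>1/2$ for every $i\in\{1,\dots,N\}$; (3) $C_{u,v,s,t}<0$ if $H_i<1/2$ for every $i\in\{1,\dots,N\}$.
   Context: Let $(\Omega,\mathcal F,\mathbb P)$ be a probability space. For $K\in]0,1[$, a fractional Brownian motion on $\mathbb{R}$ with Hurst index $K$ is a continuous centered Gaussian process $\{B^K(t),t\in\mathbb{R}\}$ with $\mathrm{Cov}(B^K(t),B^K(s))=\frac12(|t|^{2K}+|s|^{2K}-|t-s|^{2K})$. The sub-fractional Brownian motion (sfBm) of index $K$ is $\xi^K_t=(B^K_t+B^K_{-t})/\sqrt2$, $t\ge0$; it is a continuous centered Gaussian process with $\mathrm{Cov}(\xi^K_t,\xi^K_s)=s^{2K}+t^{2K}-\frac12\big((s+t)^{2K}+|t-s|^{2K}\big)$. For $N\ge1$, $H\in]0,1[^N$, $a\in\mathbb{R}^N\setminus\{0\}$, the mixed sub-fractional Brownian motion (msfBm) is $S^H_t(a)=\sum_{i=1}^N a_i\xi^{H_i}(t)$,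 $t\ge0$, where $\xi^{H_1},\dots,\xi^{H_N}$ are independent sfBms with indices $H_1,\dots,H_N$. *)

From HB Require Import structures.
From mathcomp Require Import all_boot all_order all_algebra.
From mathcomp Require Import all_classical all_reals all_analysis.
Set Implicit Arguments. Unset Strict Implicit. Unset Printing Implicit Defensive.
Import Order.TTheory GRing.Theory Num.Theory.
Import numFieldNormedType.Exports.
Local Open Scope classical_set_scope.
Local Open Scope ring_scope.

Section defs.
Context {d : measure_display} {T : measurableType d} {R : realType}.
Variable P : probability T R.

Definition gaussian_rv (X : T -> R) : Prop :=
  (exists m s : R, s != 0 /\
     forall A : set R, measurable A -> P (X @^-1` A) = normal_prob m s A)
  \/ (exists m : R, forall A : set R, measurable A -> P (X @^-1` A) = \d_m A).

Definition gaussian_process (X : R -> T -> R) : Prop :=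
  forall (ts cs : seq R), all (fun t => 0 <= t) ts -> size cs = size ts ->
    gaussian_rv (fun w => \sum_(j < size ts) nth 0 cs j * X (nth 0 ts j) w).

Definition sfbm_cov (K s t : R) : R :=
  s `^ (2 * K) + t `^ (2 * K)
  - 2^-1 * ((s + t) `^ (2 * K) + `|t - s| `^ (2 * K)).

Definition is_sfbm (K : R) (xi : R -> {RV P >-> R}) : Prop :=
  [/\ forall w, {within [set t : R | 0 <= t], continuous (fun t => xi t w)},
      gaussian_process (fun t => xi t : T -> R),
      forall t, 0 <= t -> (xi t : T -> R) \in Lfun P 2%:E,
      forall t, 0 <= t -> ('E_P[xi t])%E = 0%E
    & forall s t, 0 <= s -> 0 <= t ->
        covariance P (xi s) (xi t) = (sfbm_cov K s t)%:E].

Definition independent_processes (N : nat) (X : 'I_N -> R -> T -> R) : Prop :=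
  forall (ts : 'I_N -> seq R) (B : 'I_N -> nat -> set R),
    (forall i, all (fun t => 0 <= t) (ts i)) ->
    (forall i j, measurable (B i j)) ->
    fine (P (\bigcap_(i in [set: 'I_N]) \bigcap_(j in `I_(size (ts i)))
               (X i (nth 0 (ts i) j) @^-1` B i j)))
    = \prod_(i < N)
        fine (P (\bigcap_(j in `I_(size (ts i))) (X i (nth 0 (ts i) j) @^-1` B i j))).

Definition msfbm (N : nat) (a : 'I_N -> R) (xi : 'I_N -> R -> {RV P >-> R})
  (t : R) : T -> R := fun w => \sum_(i < N) a i * xi i t w.

Definition msfbm_incr_cov (N : nat) (a : 'I_N -> R)
  (xi : 'I_N -> R -> {RV P >-> R}) (u v s t : R) : \bar R :=
  covariance P (msfbm a xi v \- msfbm a xi u) (msfbm a xi t \- msfbm a xi s).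

End defs.

Arguments gaussian_rv {d T R} P X.
Arguments gaussian_process {d T R} P X.
Arguments is_sfbm {d T R} P K xi.
Arguments independent_processes {d T R} P {N} X.
Arguments msfbm {d T R} P {N} a xi t _.
Arguments msfbm_incr_cov {d T R} P {N} a xi u v s t.

From HB Require Import structures.
From mathcomp Require Import all_boot all_order all_algebra.
From mathcomp Require Import all_classical all_reals all_analysis.
From mathcomp Require Import measurable_realfun.
From mathcomp Require Import ring lra.
Set Implicit Arguments. Unset Strict Implicit. Unset Printing Implicit Defensive.
Import Order.TTheory GRing.Theory Num.Theory.
Import numFieldNormedType.Exports.
Local Open Scope classical_set_scope.
Local Open Scope ring_scope.

(* By independence of the components, C_{u,v,s,t} is the sum of a_i^2 g_i,
   where g_i is the covariance of the increments of the single sfBm xi^{H_i}.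
   In g_i the terms s^{2H} and t^{2H} cancel, and with F(x) = x^{2H} the eight
   remaining points are p + {0,r} + {0,m} + {0,e} for p = s - v, r = t - s,
   m = u + v, e = v - u: so -2 g_i is a third finite difference of F.  Three
   applications of the mean value theorem give r m e F'''(c) with c > 0, and
   F''' = 2H (2H - 1) (2H - 2) x^{2H-3} has the sign of 1 - 2H. *)

Section finite_difference.
Variable R : realType.
Implicit Types (F dF : R -> R) (x h : R).

Definition fdiff F h : R -> R := fun x => F (x + h) - F x.

Lemma is_derive_shift F c x d :
  is_derive (x + c) 1 F d -> is_derive x 1 (fun y => F (y + c)) d.
Proof.
move=> [dF vF].
have E : (fun h : R => h^-1 *: (((fun y => F (y + c)) \o shift x) (h *: 1)
           - F (x + c))) =
         (fun h => h^-1 *: ((F \o shift (x + c)) (h *: 1) - F (x + c))).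
  by apply/funext => h /=; rewrite addrA.
by split; rewrite /derivable /derive E.
Qed.

Section positive_derivative.
Variables (F dF : R -> R).
Hypothesis F_dF : forall x, 0 < x -> is_derive x 1 F (dF x).

Lemma continuous_pos x : 0 < x -> {for x, continuous F}.
Proof.
move=> x0; apply: differentiable_continuous; apply/derivable1_diffP.
by have [] := F_dF x0.
Qed.

Lemma is_derive_fdiff h x : 0 < h -> 0 < x ->
  is_derive x 1 (fdiff F h) (fdiff dF h x).
Proof.
move=> h0 x0; apply: is_deriveB; last exact: F_dF.
by apply: is_derive_shift; apply: F_dF; rewrite addr_gt0.
Qed.

Lemma cvg_right_fdiff h a : 0 <= a -> 0 < h ->
  F y @[y --> a^'+] --> F a -> fdiff F h y @[y --> a^'+] --> fdiff F h a.
Proof.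
move=> a0 h0 Fa; apply: cvgB => //; apply: cvg_at_right_filter.
have ah0 : 0 < a + h by rewrite ltr_pwDr.
apply: differentiable_continuous; apply/derivable1_diffP.
by have [] := is_derive_shift (F_dF ah0).
Qed.

Lemma fdiff_mvt h a : 0 <= a -> 0 < h -> F y @[y --> a^'+] --> F a ->
  exists2 c, a < c & fdiff F h a = h * dF c.
Proof.
move=> a0 h0 Fa; have ah : a < a + h by rewrite ltrDl.
have pos x : x \in `]a, a + h[ -> 0 < x.
  by move=> xI; apply: le_lt_trans a0 _; rewrite (itvP xI).
have cont : {within `[a, a + h], continuous F}.
  apply/continuous_within_itvP => //; split => //.
  - by move=> x /pos x0; apply: continuous_pos.
  - by apply/cvg_at_left_filter/continuous_pos; exact: le_lt_trans ah.
have [c cI] := MVT ah (fun x xI => F_dF (pos x xI)) cont.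
by rewrite /fdiff => ->; exists c; [rewrite (itvP cI) | rewrite addrAC subrr add0r mulrC].
Qed.

End positive_derivative.

Lemma fdiff3_mvt (F F1 F2 F3 : R -> R) p r m e :
  (forall x, 0 < x -> is_derive x 1 F (F1 x)) ->
  (forall x, 0 < x -> is_derive x 1 F1 (F2 x)) ->
  (forall x, 0 < x -> is_derive x 1 F2 (F3 x)) ->
  0 <= p -> 0 < r -> 0 < m -> 0 < e -> F y @[y --> p^'+] --> F p ->
  exists2 c, p < c & fdiff (fdiff (fdiff F e) m) r p = r * m * e * F3 c.
Proof.
move=> F_F1 F1_F2 F2_F3 p0 r0 m0 e0 Fp.
have dG1 := is_derive_fdiff F_F1 e0.
have dG2 := is_derive_fdiff dG1 m0.
have G2p := cvg_right_fdiff dG1 p0 m0 (cvg_right_fdiff F_F1 p0 e0 Fp).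
have [c1 pc1 ->] := fdiff_mvt dG2 p0 r0 G2p.
have c1_gt0 : 0 < c1 by exact: le_lt_trans pc1.
have dH1 := is_derive_fdiff F1_F2 e0.
have [c2 c12 ->] := fdiff_mvt dH1 (ltW c1_gt0) m0
  (cvg_at_right_filter (continuous_pos dH1 c1_gt0)).
have c2_gt0 : 0 < c2 by exact: lt_trans c12.
have [c3 c23 ->] := fdiff_mvt F2_F3 (ltW c2_gt0) e0
  (cvg_at_right_filter (continuous_pos F2_F3 c2_gt0)).
by exists c3; [exact: lt_trans pc1 (lt_trans c12 c23) | rewrite !mulrA].
Qed.

End finite_difference.

Section sfbm_increments.
Variable R : realType.
Implicit Types K u v s t : R.

Definition sfbm_incr_cov K u v s t : R :=
  sfbm_cov K v t - sfbm_cov K v s - sfbm_cov K u t + sfbm_cov K u s.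

Lemma sfbm_incr_cov_fdiff3 K u v s t : 0 <= u -> u <= v -> v <= s -> s <= t ->
  sfbm_incr_cov K u v s t =
  - 2^-1 * fdiff (fdiff (fdiff (fun x => x `^ (2 * K)) (v - u)) (u + v))
             (t - s) (s - v).
Proof.
move=> u0 uv vs st; rewrite /sfbm_incr_cov /sfbm_cov /fdiff.
have -> : s - v + (t - s) + (u + v) + (v - u) = v + t by ring.
have -> : s - v + (t - s) + (u + v) = u + t by ring.
have -> : s - v + (t - s) + (v - u) = t - u by ring.
have -> : s - v + (u + v) + (v - u) = v + s by ring.
have -> : s - v + (t - s) = t - v by ring.
have -> : s - v + (u + v) = u + s by ring.
have -> : s - v + (v - u) = s - u by ring.
rewrite !ger0_norm ?subr_ge0 //; [ring | lra | lra | lra].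
Qed.

Lemma is_derive_scaled_powR (k b y : R) : 0 < y ->
  is_derive y 1 (fun z => k * z `^ b) (k * (b * y `^ (b - 1))).
Proof. by move=> y0; exact: is_deriveZ (is_derive1_powR b y0). Qed.

Lemma sfbm_incr_cov_factor K u v s t : 0 < K < 1 ->
  0 <= u -> u < v -> v <= s -> s < t ->
  exists2 X, 0 < X & sfbm_incr_cov K u v s t = (2 * K - 1) * X.
Proof.
move=> /andP[K0 K1] u0 uv vs st.
set a := 2 * K.
have [a0 a2] : 0 < a /\ 0 < 2 - a by rewrite /a; split; lra.
pose F1 z := a * z `^ (a - 1).
pose F2 z := a * (a - 1) * z `^ (a - 1 - 1).
pose F3 z := a * (a - 1) * (a - 1 - 1) * z `^ (a - 1 - 1 - 1).
have F_F1 (x : R) : 0 < x -> is_derive x 1 (fun z => z `^ a) (F1 x).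
  exact: is_derive1_powR.
have F1_F2 (x : R) : 0 < x -> is_derive x 1 F1 (F2 x).
  by move=> x0; rewrite /F2 -mulrA; exact: is_derive_scaled_powR.
have F2_F3 (x : R) : 0 < x -> is_derive x 1 F2 (F3 x).
  by move=> x0; rewrite /F3 -mulrA; exact: is_derive_scaled_powR.
have Fp : 0 <= s - v -> (fun z => z `^ a) y @[y --> (s - v)^'+] --> (s - v) `^ a.
  rewrite le_eqVlt => /predU1P[<-|vs'].
    by rewrite powR0 ?gt_eqF //; exact: powR_cvg0.
  exact: cvg_at_right_filter (continuous_pos F_F1 vs').
have p0 : 0 <= s - v by lra.
have [r0 m0 e0] : [/\ 0 < t - s, 0 < u + v & 0 < v - u] by split; lra.
have [c pc E] := fdiff3_mvt F_F1 F1_F2 F2_F3 p0 r0 m0 e0 (Fp p0).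
exists (2^-1 * a * (2 - a) * ((t - s) * (u + v) * (v - u) * c `^ (a - 1 - 1 - 1))).
  have c0 : 0 < c by lra.
  by do ![apply: mulr_gt0 | apply: powR_gt0 | lra].
rewrite (sfbm_incr_cov_fdiff3 _ u0 (ltW uv) vs (ltW st)).
transitivity (- 2^-1 * ((t - s) * (u + v) * (v - u) * F3 c)).
  by congr (_ * _); exact: E.
by rewrite /F3; ring.
Qed.

Lemma sfbm_incr_cov_sign K u v s t : 0 < K < 1 ->
  0 <= u -> u < v -> v <= s -> s < t ->
  [/\ (sfbm_incr_cov K u v s t == 0) = (K == 2^-1),
      (0 < sfbm_incr_cov K u v s t) = (2^-1 < K)
    & (sfbm_incr_cov K u v s t < 0) = (K < 2^-1)].
Proof.
move=> K01 u0 uv vs st; have [X X0 ->] := sfbm_incr_cov_factor K01 u0 uv vs st.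
rewrite mulf_eq0 (gt_eqF X0) orbF pmulr_lgt0 // pmulr_llt0 //.
by split; apply/idP/idP; lra.
Qed.

End sfbm_increments.

Section independence.
Context d (T : measurableType d) (R : realType) (P : probability T R).
Local Open Scope ereal_scope.

Definition independent_RVs2 (X Y : T -> R) : Prop :=
  forall A B, measurable A -> measurable B ->
    P (X @^-1` A `&` Y @^-1` B) = P (X @^-1` A) * P (Y @^-1` B).

Section pair.
Variables X Y : {RV P >-> R}.

Let XY_mfun : measurable_fun [set: T] (fun w => (X w, Y w)).
Proof. exact: measurable_fun_pair. Qed.

Let XY : {mfun T >-> (R * R)%type} :=
  HB.pack (fun w => (X w, Y w)) (isMeasurableFun.Build _ _ _ _ _ XY_mfun).

Lemma integral_prod_distribution (f : (R * R)%type -> \bar R) :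
  independent_RVs2 X Y -> measurable_fun [set: (R * R)%type] f ->
  P.-integrable [set: T] (fun w => f (X w, Y w)) ->
  \int[distribution P X \x distribution P Y]_z f z = \int[P]_w f (X w, Y w).
Proof.
move=> XY_indep mf intf.
rewrite -(integral_distribution (X := XY)) //.
apply: eq_measure_integral => A mA _.
by apply: product_measure_unique => // B C mB mC; exact: XY_indep.
Qed.

End pair.

Lemma expectationM_independent (X Y : {RV P >-> R}) :
  independent_RVs2 X Y ->
  (X : T -> R) \in Lfun P 1 -> (Y : T -> R) \in Lfun P 1 ->
  (X \* Y)%R \in Lfun P 1 -> 'E_P[X \* Y] = 'E_P[X] * 'E_P[Y].
Proof.
move=> XY_indep X1 Y1 /Lfun1_integrable XY1.
pose f (z : (R * R)%type) := (z.1 * z.2)%:E.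
have mf : measurable_fun [set: (R * R)%type] f.
  by apply/measurable_EFinP; apply: measurable_funM;
    [exact: measurable_fst | exact: measurable_snd].
have intX : (distribution P X).-integrable [set: R] EFin.
  by apply: integrable_pushforward => //; exact/Lfun1_integrable.
have intY : (distribution P Y).-integrable [set: R] EFin.
  by apply: integrable_pushforward => //; exact/Lfun1_integrable.
have EX : 'E_P[X] = \int[distribution P X]_x x%:E.
  by rewrite unlock integral_distribution //; exact/Lfun1_integrable.
have EY : 'E_P[Y] = \int[distribution P Y]_y y%:E.
  by rewrite unlock integral_distribution //; exact/Lfun1_integrable.
have intf : (distribution P X \x distribution P Y).-integrable setT f.
  apply/integrableP; split => //.
  rewrite (integral_prod_distribution (f := fun z => `|f z|)) //.
  - by case/integrableP : XY1.
  - exact: measurableT_comp.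
  - exact: integrable_abse.
have -> : 'E_P[X \* Y] = \int[P]_w f (X w, Y w) by rewrite unlock.
rewrite -(integral_prod_distribution (f := f)) // -integral12_prod_meas1 //.
rewrite /fubini_F /f /=.
under eq_integral => x _ do (under eq_integral => y _ do rewrite EFinM;
  rewrite integralZl // -EY -(fineK (expectation_fin_num Y1)) muleC).
by rewrite integralZl // -EX fineK ?expectation_fin_num // muleC.
Qed.

Lemma covariance_independent (X Y : {RV P >-> R}) :
  independent_RVs2 X Y ->
  (X : T -> R) \in Lfun P 2%:E -> (Y : T -> R) \in Lfun P 2%:E ->
  covariance P X Y = 0.
Proof.
move=> XY_indep X2 Y2.
have [X1 Y1] := (Lfun_subset12 (fin_num_measure P _ measurableT) X2,
                 Lfun_subset12 (fin_num_measure P _ measurableT) Y2).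
rewrite covarianceE // ?Lfun2_mul_Lfun1 //.
rewrite expectationM_independent ?Lfun2_mul_Lfun1 //.
by rewrite subee // fin_numM // expectation_fin_num.
Qed.

End independence.

Section covariance_sum.
Context d (T : measurableType d) (R : realType) (P : probability T R).

Lemma Lfun2_sum (I : Type) (r : seq I) (F : I -> T -> R) :
  (forall i, F i \in Lfun P 2%:E) -> \sum_(i <- r) F i \in Lfun P 2%:E.
Proof.
move=> F2; elim: r => [|i r IH]; last by rewrite big_cons rpredD ?lee1n.
by rewrite big_nil (_ : 0 = cst 0) // Lfun_cst.
Qed.

Lemma covariance_suml (I : Type) (r : seq I) (F : I -> T -> R) (Y : T -> R) :
  (forall i, F i \in Lfun P 2%:E) -> Y \in Lfun P 2%:E ->
  covariance P (\sum_(i <- r) F i) Y = (\sum_(i <- r) covariance P (F i) Y)%E.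
Proof.
move=> F2 Y2; elim: r => [|i r IH].
  by rewrite !big_nil (_ : 0 = cst 0) ?covariance_cst_l.
by rewrite !big_cons -IH covarianceDl ?Lfun2_sum.
Qed.

Lemma covariance_sumr (I : Type) (r : seq I) (F : I -> T -> R) (X : T -> R) :
  (forall i, F i \in Lfun P 2%:E) -> X \in Lfun P 2%:E ->
  covariance P X (\sum_(i <- r) F i) = (\sum_(i <- r) covariance P X (F i))%E.
Proof.
move=> F2 X2; rewrite covarianceC covariance_suml //.
by apply: eq_bigr => i _; rewrite covarianceC.
Qed.

Lemma covariance_sum_orthogonal (I : finType) (X Y : I -> T -> R) :
  (forall i, X i \in Lfun P 2%:E) -> (forall i, Y i \in Lfun P 2%:E) ->
  (forall i j, i != j -> covariance P (X i) (Y j) = 0%E) ->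
  covariance P (\sum_i X i) (\sum_i Y i) = (\sum_i covariance P (X i) (Y i))%E.
Proof.
move=> X2 Y2 XY0; rewrite covariance_suml //; last exact: Lfun2_sum.
apply: eq_bigr => i _; rewrite covariance_sumr // (bigD1 i) //= big1 ?adde0 //.
by move=> j ji; apply: XY0; rewrite eq_sym.
Qed.

Local Open Scope ereal_scope.

Lemma covarianceZB (a b : R) (X1 X2 Y1 Y2 : T -> R) :
  X1 \in Lfun P 2%:E -> X2 \in Lfun P 2%:E ->
  Y1 \in Lfun P 2%:E -> Y2 \in Lfun P 2%:E ->
  covariance P (a \o* (X1 \- X2))%R (b \o* (Y1 \- Y2))%R =
  (a * b)%:E * (covariance P X1 Y1 - covariance P X1 Y2
                - (covariance P X2 Y1 - covariance P X2 Y2)).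
Proof.
move=> X1_2 X2_2 Y1_2 Y2_2.
have PT := fin_num_measure P _ measurableT.
have X_2 : (X1 \- X2)%R \in Lfun P 2%:E by rewrite rpredB ?lee1n.
have Y_2 : (Y1 \- Y2)%R \in Lfun P 2%:E by rewrite rpredB ?lee1n.
have bY2 : (b \o* (Y1 \- Y2))%R \in Lfun P 2%:E.
  by apply: Lfun_scale; rewrite ?ler1n.
rewrite covarianceZl; [|exact: Lfun_subset12|exact: Lfun_subset12|
  exact: Lfun2_mul_Lfun1].
rewrite covarianceZr; [|exact: Lfun_subset12|exact: Lfun_subset12|
  exact: Lfun2_mul_Lfun1].
by rewrite covarianceBl // !covarianceBr // muleA EFinM.
Qed.

End covariance_sum.

Section msfbm_covariance.
Context d (T : measurableType d) (R : realType) (P : probability T R).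
Variables (N : nat) (xi : 'I_N -> R -> {RV P >-> R}).

Lemma independent_processes_RVs2 i j p q :
  independent_processes P (fun i t => (xi i t : T -> R)) ->
  i != j -> 0 <= p -> 0 <= q -> independent_RVs2 P (xi i p) (xi j q).
Proof.
move=> xi_indep ij p0 q0 A B mA mB.
pose ts k := if k == i then [:: p] else if k == j then [:: q] else [::].
pose E k (_ : nat) := if k == i then A else B.
pose ev k := \bigcap_(n in `I_(size (ts k))) (xi k (nth 0 (ts k) n) @^-1` E k n).
have ji : (j == i) = false by rewrite eq_sym; exact/negbTE.
have ev_i : ev i = xi i p @^-1` A by rewrite /ev /ts /E eqxx II1 bigcap_set1.
have ev_j : ev j = xi j q @^-1` B by rewrite /ev /ts /E ji eqxx II1 bigcap_set1.
have ev_k k : k != i -> k != j -> ev k = setT.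
  by move=> /negbTE ki /negbTE kj; rewrite /ev /ts ki kj II0 bigcap_set0.
have ts0 k : all (fun t => 0 <= t) (ts k).
  by rewrite /ts; case: ifP => _ /=; rewrite ?p0 //; case: ifP => _ /=; rewrite ?q0.
have mE k n : measurable (E k n) by rewrite /E; case: ifP.
have := xi_indep ts E ts0 mE.
rewrite -/ev (eq_bigr (fun k => fine (P (ev k)))) //.
have -> : \bigcap_(k in [set: 'I_N]) ev k = xi i p @^-1` A `&` xi j q @^-1` B.
  apply/seteqP; split => [w /= evw | w [wA wB] k _].
    by split; [move: (evw i I) | move: (evw j I)]; rewrite ?ev_i ?ev_j.
  have [->|ki] := eqVneq k i; first by rewrite ev_i.
  have [->|kj] := eqVneq k j; first by rewrite ev_j.
  by rewrite ev_k.
rewrite (bigD1 i) //= (bigD1 j) 1?eq_sym //= big1 => [|k /andP[ki kj]]; last first.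
  by rewrite ev_k // probability_setT.
rewrite mulr1 ev_i ev_j => indep.
have mpre (k : 'I_N) x C : measurable C -> measurable (xi k x @^-1` C).
  by move=> mC; exact: measurable_funPTI.
rewrite -(fineK (fin_num_measure P _ (measurableI _ _ (mpre _ _ _ mA) (mpre _ _ _ mB)))).
by rewrite indep EFinM !fineK //; apply: fin_num_measure; exact: mpre.
Qed.

Lemma msfbmB (a : 'I_N -> R) p q :
  msfbm P a xi q \- msfbm P a xi p = \sum_i a i \o* (xi i q \- xi i p).
Proof.
apply/funext => w; rewrite fct_sumE /msfbm /= -sumrB.
by apply: eq_bigr => i _ /=; ring.
Qed.

Variable H : 'I_N -> R.
Hypothesis xi_sfbm : forall i, is_sfbm P (H i) (xi i).
Hypothesis xi_indep : independent_processes P (fun i t => (xi i t : T -> R)).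

Lemma msfbm_incr_cov_sum (a : 'I_N -> R) u v s t :
  0 <= u -> 0 <= v -> 0 <= s -> 0 <= t ->
  msfbm_incr_cov P a xi u v s t
  = (\sum_i a i ^+ 2 * sfbm_incr_cov (H i) u v s t)%:E.
Proof.
move=> u0 v0 s0 t0.
have L2 i x : 0 <= x -> (xi i x : T -> R) \in Lfun P 2%:E.
  by case: (xi_sfbm i) => _ _ + _ _; apply.
have cov i x y : 0 <= x -> 0 <= y ->
    covariance P (xi i x) (xi i y) = (sfbm_cov (H i) x y)%:E.
  by case: (xi_sfbm i) => _ _ _ _; apply.
have incr_L2 i x y : 0 <= x -> 0 <= y ->
    a i \o* (xi i y \- xi i x) \in Lfun P 2%:E.
  move=> x0 y0; apply: Lfun_scale; first by rewrite ler1n.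
  by move: (L2 i x x0) (L2 i y y0) => Lx Ly; rewrite rpredB ?lee1n.
have orth i j : i != j ->
    covariance P (a i \o* (xi i v \- xi i u)) (a j \o* (xi j t \- xi j s)) = 0%E.
  move=> ij; rewrite covarianceZB ?L2 //.
  have cov0 x y : 0 <= x -> 0 <= y -> covariance P (xi i x) (xi j y) = 0%E.
    move=> x0 y0; apply: covariance_independent; rewrite ?L2 //.
    exact: independent_processes_RVs2.
  rewrite !cov0 //.
  have E0 : (0 - 0 = 0 :> \bar R)%E by rewrite oppe0 adde0.
  by rewrite E0 E0 mule0.
rewrite /msfbm_incr_cov !msfbmB covariance_sum_orthogonal // => [|i|i]; last 2 first.
- exact: incr_L2.
- exact: incr_L2.
rewrite -sumEFin; apply: eq_bigr => i _.
rewrite covarianceZB ?L2 // !cov // -!EFinB -EFinM /sfbm_incr_cov.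
by congr EFin; ring.
Qed.

End msfbm_covariance.

Lemma sum_sqr_weighted_gt0 (R : realDomainType) (I : finType) (a g : I -> R) k :
  a k != 0 -> (forall i, 0 < g i) -> 0 < \sum_i a i ^+ 2 * g i.
Proof.
move=> ak g_gt0; rewrite (bigD1 k) //=; apply: ltr_pwDl.
  by apply: mulr_gt0; rewrite ?exprn_even_gt0.
by apply: sumr_ge0 => i _; apply: mulr_ge0; rewrite ?sqr_ge0 ?ltW.
Qed.

Theorem corollary7 (d : measure_display) (T : measurableType d) (R : realType)
  (P : probability T R) (N : nat) (H : 'I_N -> R) (a : 'I_N -> R)
  (xi : 'I_N -> R -> {RV P >-> R}) :
  (1 <= N)%N ->
  (forall i, 0 < H i < 1) ->
  (exists i, a i != 0) ->
  (forall i, is_sfbm P (H i) (xi i)) ->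
  independent_processes P (fun i t => (xi i t : T -> R)) ->
  forall u v s t : R, 0 <= u -> u < v -> v <= s -> s < t ->
    [/\ (forall i, H i = 2^-1) -> msfbm_incr_cov P a xi u v s t = 0%E,
        (forall i, 2^-1 < H i) -> (0 < msfbm_incr_cov P a xi u v s t)%E
      & (forall i, H i < 2^-1) -> (msfbm_incr_cov P a xi u v s t < 0)%E].
Proof.
move=> _ H01 [k ak] xi_sfbm xi_indep u v s t u0 uv vs st.
rewrite (msfbm_incr_cov_sum xi_sfbm xi_indep) //; try lra.
have sign i := sfbm_incr_cov_sign (H01 i) u0 uv vs st.
split=> H_cmp; rewrite ?lte_fin.
- rewrite big1 // => i _; have [+ _ _] := sign i.
  by rewrite H_cmp eqxx => /eqP ->; rewrite mulr0.
- by apply: (sum_sqr_weighted_gt0 ak) => i; have [_ -> _] := sign i.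
- rewrite -oppr_gt0 -sumrN; under eq_bigr => i _ do rewrite -mulrN.
  by apply: (sum_sqr_weighted_gt0 ak) => i; rewrite oppr_gt0; have [_ _ ->] := sign i.
Qed.
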